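(* Let $\alpha_1\ge\alpha_2\ge\cdots\ge\alpha_{14}\ge0$ be real numbers with $\alpha_1+\cdots+\alpha_{14}=1$ and $\alpha_1+\alpha_2<\frac12$, and suppose that no sub-sum $\sum_{i\in\mathcal{S}}\alpha_i$, for $\mathcal{S}\subseteq\{1,\dots,14\}$, lies in $[\frac{5}{12},\frac{7}{12}]$. Then $\alpha_5>\frac16$ and \[ \alpha_1+\alpha_2+\alpha_6+\alpha_7+\cdots+\alpha_{14}<\frac{5}{12}. \] *)

(* Indices 1..14 of the paper are represented 0-based by 'I_14. *)
From HB Require Import structures.
From mathcomp Require Import all_boot all_order all_algebra.
Set Implicit Arguments. Unset Strict Implicit. Unset Printing Implicit Defensive.
Import Order.TTheory GRing.Theory Num.Theory.

(* If no subset sum lies in [l, u], adding a weight of size at most u - l to a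
   sum below l cannot jump over the gap, so the sum stays below l.  Here
   u - l = 1/6.  If alpha_5 <= 1/6, adding alpha_5, ..., alpha_14 one by one to
   alpha_1 + alpha_2 < 5/12 keeps the sum below 5/12, forcing
   alpha_3 + alpha_4 > 7/12 > alpha_1 + alpha_2, against monotonicity.  Hence
   alpha_5 > 1/6, so the complementary sum alpha_3 + alpha_4 + alpha_5 exceeds
   1/2; the sum in the second claim is then below 1/2, hence below 5/12. *)
From HB Require Import structures.
From mathcomp Require Import all_boot all_order all_algebra.
From mathcomp Require Import lra.
Import Order.TTheory GRing.Theory Num.Theory.
Local Open Scope ring_scope.

Section SubsetSumGap.

Context {R : realFieldType} {I : finType} {a : I -> R} {l u : R}.
Hypothesis sum_notin_gap : forall S : {set I}, ~ (l <= \sum_(i in S) a i <= u).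

Lemma gap_sum_ltVgt (S : {set I}) :
  \sum_(i in S) a i < l \/ u < \sum_(i in S) a i.
Proof.
have [|ge_l] := ltrP (\sum_(i in S) a i) l; [by left | right].
by rewrite ltNge; apply: contra_notN (sum_notin_gap S) => le_u; apply/andP.
Qed.

Lemma gap_sum_setU1_lt (x : I) (S : {set I}) :
  a x <= u - l -> \sum_(i in S) a i < l -> \sum_(i in x |: S) a i < l.
Proof.
move=> le_x lt_S; have [xS | xNS] := boolP (x \in S).
  by have/setUidPr-> : [set x] \subset S by rewrite sub1set.
have := gap_sum_ltVgt (x |: S); rewrite big_setU1 //=; case=> //; lra.
Qed.

Lemma gap_sum_setU_lt (S T : {set I}) :
  {in T, forall i, a i <= u - l} -> \sum_(i in S) a i < l ->
  \sum_(i in S :|: T) a i < l.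
Proof.
have [n ltTn] := ubnP #|T|; elim: n T ltTn => // n IH T ltTn small_T lt_S.
have [-> | [x xT]] := set_0Vmem T; first by rewrite setU0.
rewrite -(setD1K xT) setUCA; apply: gap_sum_setU1_lt; first exact: small_T.
apply: IH lt_S => [|i /setD1P[_ /small_T]] //.
by rewrite -ltnS (leq_trans _ ltTn) // (cardsD1 x T) xT.
Qed.

End SubsetSumGap.

Lemma sum_inord {R : realFieldType} {n : nat} (F : 'I_n.+1 -> R) (P : pred 'I_n.+1) :
  \sum_(i | P i) F i = \sum_(0 <= i < n.+1) (if P (inord i) then F (inord i) else 0).
Proof. by rewrite big_mkcond /= big_mkord; apply: eq_bigr => i _; rewrite inord_val. Qed.

Ltac expand_sums :=
  rewrite ?sum_inord ?big_nat_recl // ?big_geq //= ?inE ?inordK //=.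

Theorem lemma12 (R : realFieldType) (a : 'I_14 -> R)
  (hnonneg : forall i : 'I_14, 0 <= a i)
  (hmono : forall i j : 'I_14, (i <= j)%N -> a j <= a i)
  (hsum : \sum_(i < 14) a i = 1)
  (htop : a (inord 0) + a (inord 1) < 1 / 2)
  (hgap : forall S : {set 'I_14},
      ~ (5 / 12 <= \sum_(i in S) a i <= 7 / 12)) :
  1 / 6 < a (inord 4) /\
  a (inord 0) + a (inord 1) + \sum_(i < 14 | (5 <= i)%N) a i < 5 / 12.
Proof.
have mono (i j : nat) : (i <= j < 14)%N -> a (inord j) <= a (inord i).
  by case/andP=> le_ij lt_j; apply: hmono; rewrite !inordK // (leq_ltn_trans le_ij).
have gap := gap_sum_ltVgt hgap.
have lt_top : \sum_(i in [set i : 'I_14 | (i < 2)%N]) a i < 5 / 12.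
  by move: (gap [set i : 'I_14 | (i < 2)%N]); expand_sums; case; lra.
have gt_a4 : 1 / 6 < a (inord 4).
  rewrite ltNge; apply/negP => le_a4.
  have small : {in [set i : 'I_14 | (4 <= i)%N], forall i, a i <= 7 / 12 - 5 / 12}.
    move=> i; rewrite inE => le4i.
    by apply: le_trans (hmono (inord 4) i _) _; [rewrite inordK | lra].
  have a2_le_a0 := mono 0 2 erefl; have a3_le_a1 := mono 1 3 erefl.
  by move: (gap_sum_setU_lt hgap _ _ small lt_top) hsum; expand_sums; lra.
split=> //.
have a3_le_a2 := mono 2 3 erefl; have a4_le_a3 := mono 3 4 erefl.
by move: (gap [set i : 'I_14 | ((i < 2) || (5 <= i))%N]) hsum; expand_sums; case; lra.
Qed.
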